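(* Consider the Lazy Trajectory Optimization (LTO) planner on a configuration space $\mathcal{X}$ normalized to $[0,1]^d$, $d\in\mathbb{N}$, which is partitioned into a uniform grid of $K^d$ voxels ($K$ intervals along each axis), with one graph vertex per voxel, and in which two vertices are joined by an edge if the $\ell_\infty$ distance between the centers of their voxels is at most $r$, where $r=i/K$ for some $i\in\{0,1,\dots,K\}$. Then the TO-aware time complexity of LTO, i.e. the number of trajectory-optimization (TO) problems it solves, is $O\big((2i+1)^d K^d\big)$.
   Context: LTO is a graph-search planner (a variant of lazy weighted A* ) over an a priori unknown graph $\mathcal{G}=(V,E)$. Each vertex represents a robot state and each edge a robot trajectory between two vertex states. The true configuration of a vertex is obtained by solving a short-horizon trajectory optimization problem (a mixed-integer convex program) restricted to that vertex's voxel, and the true trajectory of an edge is obtained by solving a trajectory optimization problem restricted to the hypercube of voxels spanned by the two endpoint voxels. LTO solves a TO problem for a vertex or an edge only when it needs it, and reuses the result if the same vertex configuration or the same configuration pair has already been solved, so each vertex and each edge requires at most one TO solve. The ''TO-aware time complexity'' measures running time by the number of TO problems solved. *)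

From HB Require Import structures.
From mathcomp Require Import all_boot all_order all_algebra.
Set Implicit Arguments. Unset Strict Implicit. Unset Printing Implicit Defensive.
Import Order.TTheory GRing.Theory Num.Theory.
Local Open Scope ring_scope.

(* A voxel of the uniform grid of [0,1]^d with K intervals per axis:
   its integer grid coordinates (k_0,...,k_{d-1}), 0 <= k_j < K.
   Graph vertices are exactly the voxels (one vertex per voxel). *)
Definition voxel (d K : nat) := {ffun 'I_d -> 'I_K}.

Definition center (R : realFieldType) (d K : nat) (v : voxel d K) (j : 'I_d) : R :=
  ((2 * v j).+1)%:R / (2 * K)%:R.

Definition linf_dist (R : realFieldType) (d K : nat) (u v : voxel d K) : R :=
  \big[Num.max/0]_(j < d) `|center R u j - center R v j|.

Definition adjacent (R : realFieldType) (d K : nat) (r : R) (u v : voxel d K) : bool :=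
  (u != v) && (linf_dist R u v <= r).

(* A TO problem solved by LTO is attached either to a vertex or to an edge
   (a pair of endpoint vertices). *)
Definition TO_problem (d K : nat) : Type := (voxel d K + (voxel d K * voxel d K))%type.

(* A (possible) record of the TO problems solved during a run of LTO on the
   graph with radius r: every solved problem belongs to a vertex or to an edge
   of the graph, and thanks to reuse of results each vertex / each edge is
   solved at most once (no duplicates). *)
Definition LTO_TO_trace (R : realFieldType) (d K : nat) (r : R)
    (s : seq (TO_problem d K)) : Prop :=
  uniq s /\
  all (fun p => match p with
                | inl _ => true
                | inr (u, v) => adjacent r u v
                end) s.

Definition TO_complexity (d K : nat) (s : seq (TO_problem d K)) : nat := size s.

From HB Require Import structures.
From mathcomp Require Import all_boot all_order all_algebra zify ring lra.
Set Implicit Arguments. Unset Strict Implicit. Unset Printing Implicit Defensive.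
Import Order.TTheory GRing.Theory Num.Theory.
Local Open Scope ring_scope.

(* Centers of voxels are spaced 1/K apart along each axis, so centers within
   l_inf distance i/K differ by at most i in every grid coordinate.  An edge
   (u, v) is therefore determined by u and the offset vector v - u, which
   takes at most (2i+1)^d values: the graph has at most (2i+1)^d K^d edges
   and K^d vertices, and LTO solves at most one TO problem per vertex or
   edge. *)

Definition grid_near (d K i : nat) (u v : voxel d K) : bool :=
  [forall j, (u j <= v j + i)%N && (v j <= u j + i)%N].

Lemma center_sub (R : realFieldType) (d K : nat) (u v : voxel d K) (j : 'I_d) :
  (0 < K)%N -> center R u j - center R v j = ((u j)%:R - (v j)%:R) / K%:R.
Proof.
move=> K_gt0; rewrite /center -mulrBl -!natr1 !natrM.
have K_neq0 : (K%:R : R) != 0 by rewrite pnatr_eq0 -lt0n.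
by field.
Qed.

Lemma center_dist_le_linf (R : realFieldType) (d K : nat) (u v : voxel d K) (j : 'I_d) :
  `|center R u j - center R v j| <= linf_dist R u v.
Proof. exact: le_bigmax. Qed.

Lemma adjacent_grid_near (R : realFieldType) (d K i : nat) (u v : voxel d K) :
  (0 < K)%N -> adjacent (i%:R / K%:R : R) u v -> grid_near i u v.
Proof.
move=> K_gt0 /andP[_ near_uv]; apply/forallP => j.
have := le_trans (center_dist_le_linf R u v j) near_uv.
have K_gt0' : (0 : R) < K%:R by rewrite ltr0n.
rewrite center_sub // normrM normfV normr_nat ler_pM2r ?invr_gt0 //.
rewrite ler_norml => /andP[lo hi].
by apply/andP; split; rewrite -(ler_nat R) natrD; lra.
Qed.

(* Shifted by i so that the offset v j - u j in [-i, i] is stored as a nat. *)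
Definition grid_offset (d K i : nat) (u v : voxel d K) : {ffun 'I_d -> 'I_(2 * i).+1} :=
  [ffun j => inord (v j + i - u j)].

Lemma grid_offset_inj (d K i : nat) (u v w : voxel d K) :
  grid_near i u v -> grid_near i u w -> grid_offset i u v = grid_offset i u w -> v = w.
Proof.
move=> /forallP near_v /forallP near_w offset_eq; apply/ffunP => j; apply: val_inj => /=.
have := congr1 (fun f : {ffun _ -> _} => nat_of_ord (f j)) offset_eq; rewrite !ffunE /=.
move: (near_v j) (near_w j) => /andP[? ?] /andP[? ?].
rewrite !inordK; lia.
Qed.

Lemma card_grid_near_pairs (d K i : nat) :
  (#|[set p : voxel d K * voxel d K | grid_near i p.1 p.2]| <= K ^ d * (2 * i + 1) ^ d)%N.
Proof.
set E := [set p | _].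
pose code (p : voxel d K * voxel d K) := (p.1, grid_offset i p.1 p.2).
have code_inj : {in E &, injective code}.
  move=> [u v] [u' w]; rewrite !inE /= => near_v + [eq_u].
  by rewrite -eq_u => near_w /(grid_offset_inj near_v near_w) ->.
rewrite -(card_in_imset code_inj); apply: leq_trans (max_card _) _.
by rewrite card_prod !card_ffun !card_ord addn1.
Qed.

Lemma uniq_sum_size_leq (A B : finType) (E : {pred B}) (s : seq (A + B)) :
  uniq s -> all (fun p => if p is inr b then b \in E else true) s ->
  (size s <= #|A| + #|E|)%N.
Proof.
move=> s_uniq s_in_E.
pose getl (p : A + B) := if p is inl a then Some a else None.
pose getr (p : A + B) := if p is inr b then Some b else None.
have getlK : ocancel getl inl by case.
have getrK : ocancel getr inr by case.
have -> : size s = (size (pmap getl s) + size (pmap getr s))%N.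
  rewrite !size_pmap -(count_predC [pred p | isSome (getl p)] s).
  by congr (_ + _)%N; apply: eq_count; case.
apply: leq_add.
  by rewrite -(card_uniqP (pmap_uniq getlK s_uniq)) max_card.
rewrite -(card_uniqP (pmap_uniq getrK s_uniq)); apply: subset_leq_card.
apply/subsetP => b; rewrite mem_pmap => /mapP[[//|b'] s_b' [->]].
exact: (allP s_in_E _ s_b').
Qed.

Theorem theorem1 :
  exists C : nat,
    forall (R : realFieldType) (d K i : nat),
      (0 < K)%N -> (i <= K)%N ->
      forall s : seq (TO_problem d K),
        LTO_TO_trace (i%:R / K%:R : R) s ->
        (TO_complexity s <= C * (2 * i + 1) ^ d * K ^ d)%N.
Proof.
exists 2%N => R d K i K_gt0 _ s [s_uniq s_edges].
pose E := [set p : voxel d K * voxel d K | grid_near i p.1 p.2].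
have s_in_E : all (fun p => if p is inr e then e \in E else true) s.
  apply/allP => -[//|[u v]] /(allP s_edges) /= adj_uv.
  by rewrite inE (adjacent_grid_near K_gt0 adj_uv).
apply: leq_trans (uniq_sum_size_leq s_uniq s_in_E) _.
rewrite card_ffun !card_ord.
have := card_grid_near_pairs d K i; rewrite -/E.
have : (0 < (2 * i + 1) ^ d)%N by rewrite expn_gt0 addn1.
nia.
Qed.
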